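(* Let $E$ be a Banach lattice and let $(u_n^* )_{n\ge1}$ be a finitely disjoint sequence in $(E^* )^+$. If there exist $u_0\in E^+$ and $\delta>0$ such that $\langle u_0,u_n^*\rangle\ge\delta$ for all $n$, then there exist a subsequence $(u^*_{n_k})_{k\ge1}$, a disjoint sequence $(v_k)_{k\ge1}$ in $[0,u_0]$ and $\varepsilon>0$ such that $\langle v_k,u^*_{n_k}\rangle\ge\varepsilon$ for all $k\in\mathbb N$.
   Context: A sequence $(x_n)$ in a Banach lattice is called finitely disjoint if for every $N\in\mathbb N$ there exist indices $i_1<i_2<\dots<i_N$ such that $x_{i_1},\dots,x_{i_N}$ are mutually disjoint. *)

From Stdlib Require Import Reals.
Open Scope R_scope.

Record BanachLattice := {
  car :> Type;
  zero : car;
  add : car -> car -> car;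
  opp : car -> car;
  scal : R -> car -> car;
  le : car -> car -> Prop;
  join : car -> car -> car;
  meet : car -> car -> car;
  norm : car -> R;
  add_assoc : forall x y z, add x (add y z) = add (add x y) z;
  add_comm : forall x y, add x y = add y x;
  add_zero : forall x, add x zero = x;
  add_opp : forall x, add x (opp x) = zero;
  scal_assoc : forall a b x, scal a (scal b x) = scal (a * b) x;
  scal_one : forall x, scal 1 x = x;
  scal_distr_l : forall a x y, scal a (add x y) = add (scal a x) (scal a y);
  scal_distr_r : forall a b x, scal (a + b) x = add (scal a x) (scal b x);
  le_refl : forall x, le x x;
  le_antisym : forall x y, le x y -> le y x -> x = y;
  le_trans : forall x y z, le x y -> le y z -> le x z;
  le_add : forall x y z, le x y -> le (add x z) (add y z);
  le_scal : forall a x y, 0 <= a -> le x y -> le (scal a x) (scal a y);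
  join_ub_l : forall x y, le x (join x y);
  join_ub_r : forall x y, le y (join x y);
  join_least : forall x y z, le x z -> le y z -> le (join x y) z;
  meet_lb_l : forall x y, le (meet x y) x;
  meet_lb_r : forall x y, le (meet x y) y;
  meet_greatest : forall x y z, le z x -> le z y -> le z (meet x y);
  norm_nonneg : forall x, 0 <= norm x;
  norm_eq0 : forall x, norm x = 0 -> x = zero;
  norm_scal : forall a x, norm (scal a x) = Rabs a * norm x;
  norm_triangle : forall x y, norm (add x y) <= norm x + norm y;
  (* lattice norm: |x| <= |y| implies ||x|| <= ||y|| *)
  norm_lattice : forall x y,
    le (join x (opp x)) (join y (opp y)) -> norm x <= norm y;
  complete : forall s : nat -> car,
    (forall eps, eps > 0 -> exists N, forall n m, (n >= N)%nat -> (m >= N)%nat ->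
        norm (add (s n) (opp (s m))) < eps) ->
    exists l, forall eps, eps > 0 -> exists N, forall n, (n >= N)%nat ->
        norm (add (s n) (opp l)) < eps
}.

Arguments zero {_}.
Arguments add {_}.
Arguments opp {_}.
Arguments scal {_}.
Arguments le {_}.
Arguments join {_}.
Arguments meet {_}.
Arguments norm {_}.

Section Defs.
Variable E : BanachLattice.

Definition sub (x y : E) : E := add x (opp y).

Definition absE (x : E) : E := join x (opp x).

Definition disjointE (x y : E) : Prop := meet (absE x) (absE y) = zero.

(* elements of the dual E^star: bounded (= norm continuous) linear functionals *)
Definition is_dual (f : E -> R) : Prop :=
  (forall x y, f (add x y) = f x + f y) /\
  (forall a x, f (scal a x) = a * f x) /\
  (exists C, forall x, Rabs (f x) <= C * norm x).

Definition is_dual_pos (f : E -> R) : Prop :=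
  is_dual f /\ forall x, le zero x -> 0 <= f x.

(* Disjointness of two positive functionals f, g in the Banach lattice E^star:
   f /\ g = 0, where (Riesz-Kantorovich) for x >= 0
   (f /\ g)(x) = inf { f y + g (x - y) : 0 <= y <= x }.
   Since this infimum is >= 0 for positive f, g, f /\ g = 0 means that the
   infimum is 0 for every x >= 0. *)
Definition disjoint_dual_pos (f g : E -> R) : Prop :=
  forall x, le zero x -> forall eps, eps > 0 ->
    exists y, le zero y /\ le y x /\ f y + g (sub x y) < eps.

Definition finitely_disjoint_dual_pos (u : nat -> E -> R) : Prop :=
  forall N : nat, exists i : nat -> nat,
    (forall j k, (j < k)%nat -> (k < N)%nat -> (i j < i k)%nat) /\
    (forall j k, (j < k)%nat -> (k < N)%nat -> disjoint_dual_pos (u (i j)) (u (i k))).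

End Defs.

Arguments sub {_}.
Arguments absE {_}.
Arguments disjointE {_}.
Arguments is_dual {_}.
Arguments is_dual_pos {_}.
Arguments disjoint_dual_pos {_}.
Arguments finitely_disjoint_dual_pos {_}.

(* Normalise the functionals to g_m = u_m / u_m(u0), so that g_m(u0) = 1, and carve
   disjoint pieces out of [0, u0] one at a time.  At each stage we keep a remainder
   w <= u0 and a set P of indices, still containing arbitrarily long disjoint
   families, with g_m(w) >= c on P.  Take such a family of length N > 2/eta beyond
   the indices used so far; disjointness of the functionals yields pairwise disjoint
   q_i <= w with g_i(q_i) >= g_i(w) - eta/2.  Since the q_i add up to at most w <= u0,
   every g_m gives at most eta/2 to some q_i, and a pigeonhole argument on long
   families fixes one i for which the indices m with g_m(q_i) <= eta/2 again contain
   arbitrarily long disjoint families.  The positive and negative parts of w - 2 q_i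
   are then a piece v with g_i(v) >= c - eta and a disjoint new remainder w' with
   g_m(w') >= c - eta for those m.  With eta = 2^-(k+2) at stage k all values stay
   above 1/2. *)

From Stdlib Require Import Reals Lra Lia List Classical ClassicalEpsilon.
Open Scope R_scope.

Local Arguments add_assoc {_}.
Local Arguments add_comm {_}.
Local Arguments add_zero {_}.
Local Arguments add_opp {_}.

Section VectorLattice.
Variable E : BanachLattice.
Implicit Types x y z a b c w : E.

Lemma add_0_l x : add zero x = x.
Proof. rewrite add_comm; apply add_zero. Qed.

Lemma add_opp_l x : add (opp x) x = zero.
Proof. rewrite add_comm; apply add_opp. Qed.

Lemma add_opp_cancel_l z x : add (opp z) (add z x) = x.
Proof. rewrite add_assoc, add_opp_l; apply add_0_l. Qed.

Lemma add_cancel_opp_l z x : add z (add (opp z) x) = x.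
Proof. rewrite add_assoc, add_opp; apply add_0_l. Qed.

Lemma add_reg_l z x y : add z x = add z y -> x = y.
Proof. intro H. rewrite <- (add_opp_cancel_l z x), H. apply add_opp_cancel_l. Qed.

Lemma opp_involutive x : opp (opp x) = x.
Proof. apply (add_reg_l (opp x)). rewrite add_opp, add_opp_l. reflexivity. Qed.

Lemma opp_zero : opp (zero : E) = zero.
Proof. apply (add_reg_l zero). rewrite add_opp, add_zero. reflexivity. Qed.

Lemma opp_add x y : opp (add x y) = add (opp x) (opp y).
Proof.
  apply (add_reg_l (add x y)). rewrite add_opp, (add_comm (opp x)), add_assoc,
    <- (add_assoc x y), add_opp, add_zero, add_opp. reflexivity.
Qed.

Lemma add_sub_cancel_l x y : add (add x y) (opp x) = y.
Proof. rewrite (add_comm x y), <- add_assoc, add_opp, add_zero. reflexivity. Qed.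

Lemma add_sub_cancel_r x y : add (add x y) (opp y) = x.
Proof. rewrite <- add_assoc, add_opp, add_zero. reflexivity. Qed.

Lemma le_add_l z x y : le x y -> le (add z x) (add z y).
Proof. intro H. rewrite (add_comm z x), (add_comm z y). apply le_add, H. Qed.

Lemma le_add_add x y x' y' : le x y -> le x' y' -> le (add x x') (add y y').
Proof. intros H H'. apply le_trans with (add y x'); [apply le_add | apply le_add_l]; auto. Qed.

Lemma add_nonneg x y : le zero x -> le zero y -> le zero (add x y).
Proof. intros. rewrite <- (add_zero zero). apply le_add_add; auto. Qed.

Lemma le_opp x y : le x y -> le (opp y) (opp x).
Proof.
  intro H. pose proof (le_add_l (add (opp x) (opp y)) x y H) as H'.
  rewrite (add_comm _ x), add_cancel_opp_l, (add_comm (opp x) (opp y)), (add_comm _ y),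
    add_cancel_opp_l in H'.
  exact H'.
Qed.

Lemma le_sub_nonneg x y : le x y -> le zero (sub y x).
Proof. intro H. rewrite <- (add_opp x). apply le_add, H. Qed.

Lemma opp_nonpos x : le zero x -> le (opp x) zero.
Proof. intro H. rewrite <- opp_zero. apply le_opp, H. Qed.

Lemma join_comm x y : join x y = join y x.
Proof. apply le_antisym; apply join_least; auto using join_ub_l, join_ub_r. Qed.

Lemma meet_comm x y : meet x y = meet y x.
Proof. apply le_antisym; apply meet_greatest; auto using meet_lb_l, meet_lb_r. Qed.

Lemma add_join_distr z x y : add z (join x y) = join (add z x) (add z y).
Proof.
  apply le_antisym.
  - rewrite <- (add_cancel_opp_l z (join (add z x) (add z y))). apply le_add_l.
    apply join_least.
    + rewrite <- (add_opp_cancel_l z x) at 1. apply le_add_l, join_ub_l.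
    + rewrite <- (add_opp_cancel_l z y) at 1. apply le_add_l, join_ub_r.
  - apply join_least; apply le_add_l; auto using join_ub_l, join_ub_r.
Qed.

Lemma add_meet_distr z x y : add z (meet x y) = meet (add z x) (add z y).
Proof.
  apply le_antisym.
  - apply meet_greatest; apply le_add_l; auto using meet_lb_l, meet_lb_r.
  - rewrite <- (add_cancel_opp_l z (meet (add z x) (add z y))). apply le_add_l.
    apply meet_greatest.
    + rewrite <- (add_opp_cancel_l z x) at 2. apply le_add_l, meet_lb_l.
    + rewrite <- (add_opp_cancel_l z y) at 2. apply le_add_l, meet_lb_r.
Qed.

Lemma opp_join x y : opp (join x y) = meet (opp x) (opp y).
Proof.
  apply le_antisym.
  - apply meet_greatest; apply le_opp; auto using join_ub_l, join_ub_r.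
  - rewrite <- (opp_involutive (meet (opp x) (opp y))). apply le_opp, join_least.
    + rewrite <- (opp_involutive x) at 1. apply le_opp, meet_lb_l.
    + rewrite <- (opp_involutive y) at 1. apply le_opp, meet_lb_r.
Qed.

Lemma opp_meet x y : opp (meet x y) = join (opp x) (opp y).
Proof. rewrite <- (opp_involutive (join (opp x) (opp y))), opp_join, !opp_involutive. reflexivity. Qed.

Lemma join_add_meet x y : add (join x y) (meet x y) = add x y.
Proof.
  assert (H : meet x y = add (add x y) (opp (join x y))).
  { rewrite opp_join, add_meet_distr, add_sub_cancel_l, add_sub_cancel_r, meet_comm. reflexivity. }
  rewrite H, (add_comm (add x y)), add_cancel_opp_l. reflexivity.
Qed.

Lemma meet_le_compat a a' b b' : le a a' -> le b b' -> le (meet a b) (meet a' b').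
Proof.
  intros. apply meet_greatest.
  - apply le_trans with a; auto using meet_lb_l.
  - apply le_trans with b; auto using meet_lb_r.
Qed.

Lemma meet_nonneg a b : le zero a -> le zero b -> le zero (meet a b).
Proof. intros; apply meet_greatest; auto. Qed.

Lemma meet_add_le a b c : le zero a -> le zero b -> le zero c ->
  le (meet (add a b) c) (add (meet a c) (meet b c)).
Proof.
  intros Ha Hb Hc. set (d := meet (add a b) c).
  assert (Hd : le (add d (opp (meet a c))) (meet b c)).
  { apply meet_greatest.
    - rewrite opp_meet, add_join_distr. apply join_least.
      + rewrite <- (add_sub_cancel_l a b). apply le_add, meet_lb_l.
      + apply le_trans with zero; auto. rewrite <- (add_opp c). apply le_add, meet_lb_r.
    - apply le_trans with d; [|apply meet_lb_r].
      rewrite <- (add_zero d) at 2. apply le_add_l, opp_nonpos, meet_nonneg; auto. }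
  pose proof (le_add_l (meet a c) _ _ Hd) as H.
  rewrite (add_comm d), add_cancel_opp_l in H. exact H.
Qed.

Lemma disjoint_le a a' b b' : le zero a -> le a a' -> le zero b -> le b b' ->
  meet a' b' = zero -> meet a b = zero.
Proof.
  intros. apply le_antisym; [rewrite <- H3; apply meet_le_compat | apply meet_nonneg]; auto.
Qed.

Lemma add_le_of_disjoint a b w : le a w -> le b w -> meet a b = zero -> le (add a b) w.
Proof. intros. rewrite <- join_add_meet, H1, add_zero. apply join_least; auto. Qed.

Lemma absE_nonneg x : le zero x -> absE x = x.
Proof.
  intro H. apply le_antisym; [apply join_least | apply join_ub_l].
  - apply le_refl.
  - apply le_trans with zero; auto using opp_nonpos.
Qed.

Definition pos_part x : E := join x zero.

Lemma pos_part_nonneg x : le zero (pos_part x).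
Proof. apply join_ub_r. Qed.

Lemma pos_part_le x w : le zero w -> le x w -> le (pos_part x) w.
Proof. intros; apply join_least; auto. Qed.

Lemma meet_pos_part_opp x : meet (pos_part x) (pos_part (opp x)) = zero.
Proof.
  unfold pos_part. set (n := join (opp x) zero).
  assert (Hp : join x zero = add n x).
  { rewrite add_comm. unfold n. rewrite add_join_distr, add_opp, add_zero, join_comm. reflexivity. }
  assert (Hm : meet x zero = opp n).
  { unfold n. rewrite opp_join, opp_involutive, opp_zero. reflexivity. }
  rewrite Hp. rewrite <- (add_zero n) at 2. rewrite <- add_meet_distr, Hm, add_opp. reflexivity.
Qed.


Definition additive (f : E -> R) := forall x y, f (add x y) = f x + f y.
Definition positive (f : E -> R) := forall x, le zero x -> 0 <= f x.

Section PositiveFunctional.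
Variable f : E -> R.
Hypothesis f_add : additive f.
Hypothesis f_pos : positive f.

Lemma additive_zero : f zero = 0.
Proof. pose proof (f_add zero zero) as H. rewrite add_zero in H. lra. Qed.

Lemma additive_opp x : f (opp x) = - f x.
Proof. pose proof (f_add x (opp x)) as H. rewrite add_opp, additive_zero in H. lra. Qed.

Lemma additive_sub x y : f (sub x y) = f x - f y.
Proof. unfold sub. rewrite f_add, additive_opp. lra. Qed.

Lemma positive_monotone x y : le x y -> f x <= f y.
Proof. intro H. pose proof (f_pos _ (le_sub_nonneg _ _ H)). rewrite additive_sub in H0. lra. Qed.

Lemma positive_meet_ge a b w : le a w -> le b w -> f (meet a b) >= f a + f b - f w.
Proof.
  intros Ha Hb. pose proof (f_equal f (join_add_meet a b)) as H. rewrite !f_add in H.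
  pose proof (positive_monotone (join a b) w (join_least _ _ _ _ Ha Hb)). lra.
Qed.

End PositiveFunctional.

(* The two pieces are the positive and negative parts of [x - 2y]. *)
Lemma split_below x y : le zero y -> le y x ->
  exists a b, le zero a /\ le a x /\ le zero b /\ le b x /\ meet a b = zero /\
    forall f, additive f -> positive f -> f a >= f x - 2 * f y /\ f b >= 2 * f y - f x.
Proof.
  intros Hy Hyx. set (z := sub x (add y y)).
  assert (Hx : le zero x) by (apply le_trans with y; auto).
  exists (pos_part z), (pos_part (opp z)).
  split; [apply pos_part_nonneg|]. split.
  { apply pos_part_le; auto. unfold z, sub. rewrite <- (add_zero x) at 2.
    apply le_add_l, opp_nonpos, add_nonneg; auto. }
  split; [apply pos_part_nonneg|]. split.
  { apply pos_part_le; auto. unfold z, sub. rewrite opp_add, opp_involutive.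
    rewrite <- (add_opp_cancel_l x x) at 2. apply le_add_l, le_add_add; auto. }
  split; [apply meet_pos_part_opp|].
  intros f Hadd Hpos.
  assert (Hz : f z = f x - 2 * f y) by (unfold z; rewrite additive_sub, Hadd; auto; lra).
  pose proof (positive_monotone f Hadd Hpos _ _ (join_ub_l _ z zero)).
  pose proof (positive_monotone f Hadd Hpos _ _ (join_ub_l _ (opp z) zero)).
  rewrite additive_opp in H0 by auto. unfold pos_part in *. lra.
Qed.

Lemma disjoint_dual_pos_separate f h x eps :
  additive f -> positive f -> additive h -> positive h ->
  disjoint_dual_pos f h -> le zero x -> eps > 0 ->
  exists a b, le zero a /\ le a x /\ le zero b /\ le b x /\ meet a b = zero /\
    f a >= f x - eps /\ h b >= h x - eps.
Proof.
  intros Fadd Fpos Hadd Hpos Hfh Hx Heps.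
  destruct (Hfh x Hx (eps / 2)) as [y [Hy [Hyx Hsmall]]]; [lra|].
  destruct (split_below x y Hy Hyx) as [a [b [Ha [Hax [Hb [Hbx [Hab Hval]]]]]]].
  exists a, b. do 5 (split; auto).
  destruct (Hval f Fadd Fpos) as [Hfa _]. destruct (Hval h Hadd Hpos) as [_ Hhb].
  pose proof (Fpos y Hy). pose proof (Hpos _ (le_sub_nonneg _ _ Hyx)).
  rewrite additive_sub in Hsmall, H0 by auto. lra.
Qed.

Lemma disjoint_dual_pos_scale f h r s :
  positive f -> positive h -> 0 <= r -> 0 <= s -> disjoint_dual_pos f h ->
  disjoint_dual_pos (fun x => f x * r) (fun x => h x * s).
Proof.
  intros Fpos Hpos Hr Hs Hfh x Hx eps Heps.
  destruct (Hfh x Hx (eps / (r + s + 1))) as [y [Hy [Hyx Hsmall]]].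
  { apply Rdiv_lt_0_compat; lra. }
  exists y. do 2 (split; auto).
  pose proof (Fpos y Hy). pose proof (Hpos _ (le_sub_nonneg _ _ Hyx)).
  apply Rmult_lt_compat_r with (r := r + s + 1) in Hsmall; [|lra].
  unfold Rdiv in Hsmall. rewrite Rmult_assoc, Rinv_l in Hsmall by lra. nra.
Qed.

Section Family.
Variable g : nat -> E -> R.
Hypothesis g_add : forall m, additive (g m).
Hypothesis g_pos : forall m, positive (g m).

Definition disjoint_index i j := disjoint_dual_pos (g i) (g j).

Lemma separate_from_family w eps h t : le zero w -> eps > 0 ->
  (forall j, In j t -> disjoint_index h j) ->
  exists a (b : nat -> E), le zero a /\ le a w /\ g h a >= g h w - INR (length t) * eps /\
    forall j, In j t -> le zero (b j) /\ le (b j) w /\ g j (b j) >= g j w - eps /\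
      meet a (b j) = zero.
Proof.
  intros Hw Heps. induction t as [|j t IH]; intro Hdisj.
  - exists w, (fun _ => w). simpl. split; [|split; [apply le_refl|split]]; auto; [lra | contradiction].
  - destruct IH as [a [b [Ha [Haw [Hga Hb]]]]]; [intros; apply Hdisj; simpl; auto|].
    destruct (disjoint_dual_pos_separate (g h) (g j) w eps)
      as [a' [b' [Ha' [Ha'w [Hb' [Hb'w [Hab' [Hga' Hgb']]]]]]]]; auto.
    { apply Hdisj; simpl; auto. }
    exists (meet a a'), (fun k => if Nat.eq_dec k j then b' else b k).
    split; [apply meet_nonneg; auto|]. split; [apply le_trans with a; auto using meet_lb_l|].
    split.
    { pose proof (positive_meet_ge (g h) (g_add h) (g_pos h) a a' w Haw Ha'w).
      simpl length. rewrite S_INR. lra. }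
    intros k Hk. destruct (Nat.eq_dec k j) as [->|Hkj].
    + repeat split; auto. apply (disjoint_le _ a' _ b'); auto using meet_nonneg, meet_lb_r, le_refl.
    + destruct Hk as [Hk|Hk]; [congruence|]. destruct (Hb k Hk) as [B0 [Bw [Bg Bd]]].
      repeat split; auto. apply (disjoint_le _ a _ (b k)); auto using meet_nonneg, meet_lb_l, le_refl.
Qed.

(* The loss [length s * eps] comes from one application of
   [disjoint_dual_pos_separate] per other member of the family. *)
Lemma separate_family w eps s : le zero w -> eps > 0 -> NoDup s ->
  ForallOrdPairs disjoint_index s ->
  exists q : nat -> E,
    (forall i, In i s -> le zero (q i) /\ le (q i) w /\ g i (q i) >= g i w - INR (length s) * eps) /\
    (forall i j, In i s -> In j s -> i <> j -> meet (q i) (q j) = zero).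
Proof.
  intros Hw Heps. induction s as [|h t IH]; intros Hnd Hfop.
  - exists (fun _ => w). split; intros i; simpl; tauto.
  - inversion Hnd as [|? ? Hht Hnd']; subst. inversion Hfop as [|? ? Hh Hfop']; subst.
    destruct (IH Hnd' Hfop') as [q [Hq Hqd]].
    destruct (separate_from_family w eps h t Hw Heps) as [a [b [Ha [Haw [Hga Hb]]]]].
    { rewrite Forall_forall in Hh. exact Hh. }
    exists (fun k => if Nat.eq_dec k h then a else meet (q k) (b k)).
    assert (Hq' : forall i, In i t -> le zero (meet (q i) (b i)) /\ le (meet (q i) (b i)) (q i)
                                       /\ meet a (meet (q i) (b i)) = zero).
    { intros i Hi. destruct (Hq i Hi) as [Q0 _]. destruct (Hb i Hi) as [B0 [_ [_ Bd]]].
      repeat split; auto using meet_nonneg, meet_lb_l.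
      apply (disjoint_le _ a _ (b i)); auto using meet_nonneg, meet_lb_r, le_refl. }
    split.
    + intros i Hi. simpl length. rewrite S_INR. destruct (Nat.eq_dec i h) as [->|Hih].
      * repeat split; auto. pose proof (pos_INR (length t)). nra.
      * destruct Hi as [Hi|Hi]; [congruence|].
        destruct (Hq i Hi) as [Q0 [Qw Qg]]. destruct (Hb i Hi) as [B0 [Bw [Bg _]]].
        destruct (Hq' i Hi) as [M0 [Mq _]].
        repeat split; auto. apply le_trans with (q i); auto.
        pose proof (positive_meet_ge (g i) (g_add i) (g_pos i) _ _ w Qw Bw). lra.
    + intros i j Hi Hj Hij.
      destruct (Nat.eq_dec i h) as [->|Hih]; destruct (Nat.eq_dec j h) as [->|Hjh].
      * congruence.
      * destruct Hj as [Hj|Hj]; [congruence|]. apply Hq'; auto.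
      * destruct Hi as [Hi|Hi]; [congruence|]. rewrite meet_comm. apply Hq'; auto.
      * destruct Hi as [Hi|Hi]; [congruence|]. destruct Hj as [Hj|Hj]; [congruence|].
        destruct (Hq' i Hi) as [Mi0 [Miq _]]. destruct (Hq' j Hj) as [Mj0 [Mjq _]].
        apply (disjoint_le _ (q i) _ (q j)); auto.
Qed.

End Family.

Fixpoint esum (q : nat -> E) (s : list nat) : E :=
  match s with nil => zero | i :: t => add (q i) (esum q t) end.

Lemma esum_nonneg q s : (forall i, In i s -> le zero (q i)) -> le zero (esum q s).
Proof.
  induction s as [|i t IH]; intro H; simpl; [apply le_refl|].
  apply add_nonneg; [apply H; simpl; auto | apply IH; intros; apply H; simpl; auto].
Qed.

Lemma meet_esum_zero q c s : le zero c -> (forall i, In i s -> le zero (q i)) ->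
  (forall i, In i s -> meet c (q i) = zero) -> meet c (esum q s) = zero.
Proof.
  intro Hc. induction s as [|i t IH]; intros Hq Hd; simpl.
  - apply le_antisym; [apply meet_lb_r | apply meet_nonneg, le_refl; auto].
  - assert (Ht : le zero (esum q t)) by (apply esum_nonneg; intros; apply Hq; simpl; auto).
    assert (Hi : le zero (q i)) by (apply Hq; simpl; auto).
    apply le_antisym; [|apply meet_nonneg, add_nonneg; auto].
    rewrite meet_comm. eapply le_trans; [apply meet_add_le; auto|].
    rewrite meet_comm, Hd, (meet_comm (esum q t)), IH, add_zero.
    + apply le_refl.
    + intros j Hj; apply Hq; simpl; auto.
    + intros j Hj; apply Hd; simpl; auto.
    + simpl; auto.
Qed.

Lemma esum_le q w s : NoDup s -> (forall i, In i s -> le zero (q i) /\ le (q i) w) ->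
  (forall i j, In i s -> In j s -> i <> j -> meet (q i) (q j) = zero) ->
  le zero w -> le (esum q s) w.
Proof.
  intros Hnd Hq Hd Hw. induction s as [|h t IH]; simpl; [exact Hw|].
  inversion Hnd as [|? ? Hht Hnd']; subst.
  apply add_le_of_disjoint; [apply Hq; simpl; auto | apply IH; auto; intros; simpl in *; auto |].
  apply meet_esum_zero; [apply Hq; simpl; auto | intros; apply Hq; simpl; auto |].
  intros i Hi. apply Hd; simpl; auto. intros ->. contradiction.
Qed.

Lemma additive_esum f q s : additive f ->
  f (esum q s) = fold_right Rplus 0 (map (fun i => f (q i)) s).
Proof. intro Hf. induction s; simpl; [apply additive_zero; auto | rewrite Hf, IHs; reflexivity]. Qed.

Lemma exists_le_of_sum_le (r : nat -> R) s t :
  fold_right Rplus 0 (map r s) < INR (length s) * t -> exists i, In i s /\ r i <= t.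
Proof.
  induction s as [|i s IH]; cbn [length map fold_right]; [simpl; lra|]. rewrite S_INR. intro H.
  destruct (Rle_dec (r i) t) as [Hi|Hi]; [exists i; simpl; auto|].
  apply Rnot_le_lt in Hi. destruct IH as [j [Hj Hr]]; [lra | exists j; simpl; auto].
Qed.

(* Pairwise disjoint pieces of [w] add up to at most [w]. *)
Lemma positive_small_piece f (q : nat -> E) w (s : list nat) t : additive f -> positive f -> NoDup s ->
  (forall i, In i s -> le zero (q i) /\ le (q i) w) ->
  (forall i j, In i s -> In j s -> i <> j -> meet (q i) (q j) = zero) ->
  le zero w -> f w < INR (length s) * t -> exists i, In i s /\ f (q i) <= t.
Proof.
  intros Hadd Hpos Hnd Hq Hd Hw Hlt. apply exists_le_of_sum_le.
  rewrite <- additive_esum by exact Hadd.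
  pose proof (positive_monotone f Hadd Hpos _ _ (esum_le q w s Hnd Hq Hd Hw)). lra.
Qed.

End VectorLattice.

Definition fin_disjoint (D : nat -> nat -> Prop) (P : nat -> Prop) :=
  forall K, exists l, (K <= length l)%nat /\ NoDup l /\ Forall P l /\ ForallOrdPairs D l.

Lemma ForallOrdPairs_impl (D D' : nat -> nat -> Prop) l :
  (forall i j, D i j -> D' i j) -> ForallOrdPairs D l -> ForallOrdPairs D' l.
Proof.
  intros HD. induction 1; constructor; auto. eapply Forall_impl; [|eassumption]. auto.
Qed.

Lemma ForallOrdPairs_filter (D : nat -> nat -> Prop) f l :
  ForallOrdPairs D l -> ForallOrdPairs D (filter f l).
Proof.
  induction 1 as [|a l Ha Hl IH]; simpl; [constructor|]. destruct (f a); auto.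
  constructor; auto. rewrite Forall_forall in *. intros x Hx. apply filter_In in Hx. apply Ha; tauto.
Qed.

Lemma filter_length_add (f : nat -> bool) l :
  (length (filter f l) + length (filter (fun x => negb (f x)) l))%nat = length l.
Proof. induction l as [|a l IH]; simpl; auto. destruct (f a); simpl; lia. Qed.

Lemma fin_disjoint_weaken (D D' : nat -> nat -> Prop) (P P' : nat -> Prop) :
  (forall i j, D i j -> D' i j) -> (forall m, P m -> P' m) -> fin_disjoint D P -> fin_disjoint D' P'.
Proof.
  intros HD HP F K. destruct (F K) as [l [Hlen [Hnd [HPl HDl]]]].
  exists l. repeat split; auto. - eapply Forall_impl; eauto. - eapply ForallOrdPairs_impl; eauto.
Qed.

Lemma fin_disjoint_filter D P (A : nat -> Prop) l :
  NoDup l -> Forall P l -> ForallOrdPairs D l ->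
  let l' := filter (fun m => if excluded_middle_informative (A m) then true else false) l in
  NoDup l' /\ Forall (fun m => P m /\ A m) l' /\ ForallOrdPairs D l'.
Proof.
  intros Hnd HP HD l'. split; [apply NoDup_filter; auto|]. split; [|apply ForallOrdPairs_filter; auto].
  rewrite Forall_forall in *. intros x Hx. apply filter_In in Hx. destruct Hx as [Hx HA].
  destruct (excluded_middle_informative (A x)); [auto | discriminate].
Qed.

(* If the [A]-part has no family of length [KA], a family of length [KA + K] has
   at least [K] members outside [A]. *)
Lemma fin_disjoint_split D P (A : nat -> Prop) : fin_disjoint D P ->
  fin_disjoint D (fun m => P m /\ A m) \/ fin_disjoint D (fun m => P m /\ ~ A m).
Proof.
  intro F. destruct (classic (fin_disjoint D (fun m => P m /\ A m))) as [H|H]; [left; auto|right].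
  apply not_all_ex_not in H. destruct H as [KA HKA].
  intro K. destruct (F (KA + K)%nat) as [l [Hlen [Hnd [HP HD]]]].
  set (dec := fun m => if excluded_middle_informative (A m) then true else false).
  pose proof (filter_length_add dec l) as Hsplit.
  destruct (Nat.le_gt_cases KA (length (filter dec l))) as [Hle|Hgt].
  - exfalso. apply HKA. exists (filter dec l). split; auto. apply fin_disjoint_filter; auto.
  - exists (filter (fun m => negb (dec m)) l). split; [lia|].
    destruct (fin_disjoint_filter D P (fun m => ~ A m) l Hnd HP HD) as [H1 [H2 H3]].
    replace (filter (fun m => negb (dec m)) l)
      with (filter (fun m => if excluded_middle_informative (~ A m) then true else false) l); auto.
    apply filter_ext. intro m. unfold dec.
    destruct (excluded_middle_informative (A m)), (excluded_middle_informative (~ A m)); tauto.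
Qed.

Lemma fin_disjoint_tail D P b : fin_disjoint D P -> fin_disjoint D (fun m => P m /\ (b < m)%nat).
Proof.
  intro F. destruct (fin_disjoint_split D P (fun m => (b < m)%nat) F) as [H|H]; auto.
  exfalso. destruct (H (S (S b))) as [l [Hlen [Hnd [HP _]]]].
  assert (Hincl : incl l (seq 0 (S b))).
  { intros x Hx. rewrite Forall_forall in HP. apply HP in Hx. apply in_seq. lia. }
  pose proof (NoDup_incl_length Hnd Hincl). rewrite length_seq in H0. lia.
Qed.

Lemma fin_disjoint_pigeonhole D P (Q : nat -> nat -> Prop) l : fin_disjoint D P ->
  (forall m, P m -> exists i, In i l /\ Q i m) ->
  exists i, In i l /\ fin_disjoint D (fun m => P m /\ Q i m).
Proof.
  revert P. induction l as [|i t IH]; intros P F H.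
  - exfalso. destruct (F 1%nat) as [[|m l] [Hlen [_ [HP _]]]]; simpl in Hlen; [lia|].
    inversion HP; subst. destruct (H m) as [i [[] _]]; auto.
  - destruct (fin_disjoint_split D P (Q i) F) as [Hi|Hi]; [exists i; simpl; auto|].
    destruct (IH _ Hi) as [j [Hj Fj]].
    + intros m [Pm Qm]. destruct (H m Pm) as [k [[->|Hk] Qk]]; [tauto | eauto].
    + exists j. split; [simpl; auto|]. eapply fin_disjoint_weaken; [| |exact Fj]; simpl; tauto.
Qed.

Lemma ForallOrdPairs_map_seq (D : nat -> nat -> Prop) (f : nat -> nat) a n :
  (forall j k, (a <= j)%nat -> (j < k)%nat -> (k < a + n)%nat -> D (f j) (f k)) ->
  ForallOrdPairs D (map f (seq a n)).
Proof.
  revert a. induction n as [|n IH]; intros a H; simpl; constructor.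
  - rewrite Forall_forall. intros x Hx. apply in_map_iff in Hx. destruct Hx as [k [<- Hk]].
    apply in_seq in Hk. apply H; lia.
  - apply IH. intros; apply H; lia.
Qed.

Lemma fin_disjoint_of_finitely_disjoint (E : BanachLattice) (u : nat -> E -> R) :
  finitely_disjoint_dual_pos u ->
  fin_disjoint (fun i j => disjoint_dual_pos (u i) (u j)) (fun _ => True).
Proof.
  intros Hfd K. destruct (Hfd K) as [i [Hinc Hdisj]]. exists (map i (seq 0 K)).
  split; [rewrite length_map, length_seq; lia|]. split; [|split].
  - apply NoDup_iff_ForallOrdPairs, ForallOrdPairs_map_seq.
    intros j k _ Hjk Hk. specialize (Hinc j k Hjk ltac:(lia)). lia.
  - rewrite Forall_forall; auto.
  - apply ForallOrdPairs_map_seq. intros j k _ Hjk Hk. apply Hdisj; lia.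
Qed.

Lemma dependent_choice_nat {T : Type} (P : nat -> T -> Prop) (R : nat -> T -> T -> Prop) s0 :
  P 0%nat s0 -> (forall k s, P k s -> exists s', P (S k) s' /\ R k s s') ->
  exists f : nat -> T, forall k, P k (f k) /\ R k (f k) (f (S k)).
Proof.
  intros H0 Hnext.
  destruct (choice (A := (nat * T)%type) (B := T)
    (fun ks s' => P (fst ks) (snd ks) -> P (S (fst ks)) s' /\ R (fst ks) (snd ks) s'))
    as [next Hnext'].
  { intros [k s]. destruct (classic (P k s)) as [Hs|Hs].
    - destruct (Hnext k s Hs) as [s' Hs']. exists s'. auto.
    - exists s. simpl. tauto. }
  set (f := fix f k := match k with O => s0 | S k => next (k, f k) end).
  assert (Hf : forall k, P k (f k)).
  { induction k as [|k IH]; [exact H0|]. exact (proj1 (Hnext' (k, f k) IH)). }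
  exists f. intro k. split; [apply Hf|]. exact (proj2 (Hnext' (k, f k) (Hf k))).
Qed.

Section Construction.
Variable E : BanachLattice.
Variable g : nat -> E -> R.
Hypothesis g_add : forall m, additive E (g m).
Hypothesis g_pos : forall m, positive E (g m).
Variable u0 : E.
Hypothesis u0_nonneg : le zero u0.
Hypothesis g_u0 : forall m, g m u0 = 1.
Hypothesis g_fin_disjoint : fin_disjoint (disjoint_index E g) (fun _ => True).

Notation D := (disjoint_index E g).

Lemma carve_piece w P c eta b : 0 < eta -> le zero w -> le w u0 -> fin_disjoint D P ->
  (forall m, P m -> g m w >= c) ->
  exists n (v w' : E) P', (b < n)%nat /\ le zero v /\ le v w /\ le zero w' /\ le w' w /\
    meet v w' = zero /\ g n v >= c - eta /\ fin_disjoint D P' /\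
    (forall m, P' m -> g m w' >= c - eta).
Proof.
  intros Heta Hw Hwu F Hc.
  destruct (INR_unbounded (2 / eta)) as [N HN].
  destruct (fin_disjoint_tail _ P b F N) as [l [Hlen [Hnd [Hl HDl]]]].
  set (eps := eta / (2 * (INR (length l) + 1))).
  assert (Hlen0 : 0 <= INR (length l)) by apply pos_INR.
  assert (Heps : eps > 0) by (unfold eps; apply Rdiv_lt_0_compat; lra).
  assert (Hloss : INR (length l) * eps <= eta / 2).
  { unfold eps. apply Rmult_le_reg_r with (2 * (INR (length l) + 1)); [lra|].
    field_simplify; [nra | lra]. }
  destruct (separate_family E g g_add g_pos w eps l Hw Heps Hnd HDl) as [q [Hq Hqd]].
  assert (Hsmall : forall m, P m -> exists i, In i l /\ g m (q i) <= eta / 2).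
  { intros m _. apply (positive_small_piece E (g m) q w l); auto.
    - intros i Hi. destruct (Hq i Hi) as [? [? _]]. auto.
    - assert (g m w <= 1) by (rewrite <- (g_u0 m); apply positive_monotone; auto).
      assert (INR N <= INR (length l)) by (apply le_INR; lia).
      assert (2 / eta * eta = 2) by (field; lra). nra. }
  destruct (fin_disjoint_pigeonhole _ P (fun i m => g m (q i) <= eta / 2) l F Hsmall)
    as [i [Hi Fi]].
  rewrite Forall_forall in Hl. destruct (Hl i Hi) as [HPi Hbi].
  destruct (Hq i Hi) as [Hqi [Hqiw Hgqi]].
  destruct (split_below E w (q i) Hqi Hqiw) as [a [a' [Ha [Haw [Ha' [Ha'w [Hd Hval]]]]]]].
  exists i, a', a, (fun m => P m /\ g m (q i) <= eta / 2).
  do 5 (split; auto). split; [rewrite meet_comm; exact Hd|]. split; [|split; auto].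
  - destruct (Hval (g i) (g_add i) (g_pos i)) as [_ H]. specialize (Hc i HPi). lra.
  - intros m [Pm Qm]. destruct (Hval (g m) (g_add m) (g_pos m)) as [H _]. specialize (Hc m Pm). lra.
Qed.

Definition level k := 1 / 2 + (1 / 2) ^ (S k).

Lemma level_S k : level k - (1 / 2) ^ (S (S k)) = level (S k).
Proof. unfold level. simpl. lra. Qed.

Lemma level_gt k : level k > 1 / 2.
Proof. unfold level. pose proof (pow_lt (1 / 2) (S k)). lra. Qed.

Record stage := { idx : nat; piece : E; rest : E; live : nat -> Prop }.

Definition stage_inv k s := le zero (rest s) /\ le (rest s) u0 /\ fin_disjoint D (live s) /\
  forall m, live s m -> g m (rest s) >= level k.

Definition stage_next k s s' := (idx s < idx s')%nat /\ le zero (piece s') /\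
  le (piece s') (rest s) /\ le (rest s') (rest s) /\ meet (piece s') (rest s') = zero /\
  g (idx s') (piece s') >= level (S k).

Lemma stage_step k s : stage_inv k s -> exists s', stage_inv (S k) s' /\ stage_next k s s'.
Proof.
  intros [Hw [Hwu [F Hc]]].
  destruct (carve_piece (rest s) (live s) (level k) ((1 / 2) ^ (S (S k))) (idx s))
    as [n [v [w' [P' [Hn [Hv [Hvw [Hw' [Hw'w [Hd [Hgv [F' Hc']]]]]]]]]]]]; auto.
  { apply pow_lt. lra. }
  rewrite level_S in Hgv, Hc'.
  exists {| idx := n; piece := v; rest := w'; live := P' |}.
  unfold stage_inv, stage_next; simpl. repeat split; auto. apply le_trans with (rest s); auto.
Qed.

Lemma disjoint_pieces : exists (nk : nat -> nat) (v : nat -> E),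
  (forall k, (nk k < nk (S k))%nat) /\
  (forall k, le zero (v k) /\ le (v k) u0) /\
  (forall j k, j <> k -> meet (v j) (v k) = zero) /\
  (forall k, g (nk k) (v k) >= 1 / 2).
Proof.
  destruct (dependent_choice_nat stage_inv stage_next
              {| idx := 0; piece := u0; rest := u0; live := fun _ => True |}) as [f Hf].
  { unfold stage_inv; simpl. repeat split; auto using le_refl.
    intros m _. rewrite g_u0. unfold level. simpl. lra. }
  { exact stage_step. }
  assert (Hrest : forall k, le zero (rest (f k)) /\ le (rest (f k)) u0)
    by (intro k; destruct (Hf k) as [[? [? _]] _]; auto).
  assert (Hrest_anti : forall j k, (j <= k)%nat -> le (rest (f k)) (rest (f j))).
  { intros j k Hjk. induction Hjk as [|k _ IH]; [apply le_refl|].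
    apply le_trans with (rest (f k)); auto. apply (Hf k). }
  assert (Hpiece : forall k, le zero (piece (f (S k))) /\ le (piece (f (S k))) (rest (f k)))
    by (intro k; destruct (Hf k) as [_ [_ [? [? _]]]]; auto).
  assert (Hdisj : forall j k, (j < k)%nat -> meet (piece (f (S j))) (piece (f (S k))) = zero).
  { intros j k Hjk. destruct (Hf j) as [_ [_ [_ [_ [_ [Hd _]]]]]].
    apply (disjoint_le E _ (piece (f (S j))) _ (rest (f (S j)))); try apply Hpiece; auto using le_refl.
    apply le_trans with (rest (f k)); [apply Hpiece | apply Hrest_anti; lia]. }
  exists (fun k => idx (f (S k))), (fun k => piece (f (S k))).
  split; [|split; [|split]].
  - intro k. apply (Hf (S k)).
  - intro k. split; [apply Hpiece|]. apply le_trans with (rest (f k)); apply Hpiece || apply Hrest.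
  - intros j k Hjk. destruct (Nat.lt_gt_cases j k) as [[Hlt|Hgt] _]; auto.
    rewrite meet_comm. auto.
  - intro k. destruct (Hf k) as [_ [_ [_ [_ [_ [_ Hg]]]]]]. pose proof (level_gt (S k)). lra.
Qed.

End Construction.

Theorem proposition3p7 (E : BanachLattice) (u : nat -> E -> R)
  (hpos : forall n, is_dual_pos (u n))
  (hfd : finitely_disjoint_dual_pos u)
  (u0 : E) (hu0 : le zero u0) (delta : R) (hdelta : delta > 0)
  (hbound : forall n, u n u0 >= delta) :
  exists (nk : nat -> nat) (v : nat -> E) (eps : R),
    (forall k, (nk k < nk (S k))%nat) /\
    (forall k, le zero (v k) /\ le (v k) u0) /\
    (forall j k, j <> k -> disjointE (v j) (v k)) /\
    eps > 0 /\
    (forall k, u (nk k) (v k) >= eps).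
Proof.
  assert (u_add : forall m, additive E (u m)) by (intro m; destruct (hpos m) as [[H _] _]; exact H).
  assert (u_pos : forall m, positive E (u m)) by (intro m; destruct (hpos m) as [_ H]; exact H).
  assert (Hu0 : forall m, u m u0 > 0) by (intro m; specialize (hbound m); lra).
  set (g := fun m x => u m x * / u m u0).
  assert (g_add : forall m, additive E (g m)).
  { intros m x y. unfold g. rewrite u_add. lra. }
  assert (g_pos : forall m, positive E (g m)).
  { intros m x Hx. apply Rmult_le_pos; [apply u_pos; auto | left; apply Rinv_0_lt_compat, Hu0]. }
  assert (g_u0 : forall m, g m u0 = 1) by (intro m; apply Rinv_r; specialize (Hu0 m); lra).
  assert (g_fin : fin_disjoint (disjoint_index E g) (fun _ => True)).
  { apply (fin_disjoint_weaken (fun i j => disjoint_dual_pos (u i) (u j)) _ (fun _ => True));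
      [| auto | apply fin_disjoint_of_finitely_disjoint, hfd].
    intros i j H. apply disjoint_dual_pos_scale; auto; left; apply Rinv_0_lt_compat, Hu0. }
  destruct (disjoint_pieces E g g_add g_pos u0 hu0 g_u0 g_fin) as [nk [v [Hnk [Hv [Hvd Hgv]]]]].
  exists nk, v, (delta / 2). repeat split; try apply Hv; auto; [|lra|].
  - intros j k Hjk. unfold disjointE. rewrite !absE_nonneg by apply Hv. auto.
  - intro k. specialize (Hgv k). specialize (hbound (nk k)). specialize (Hu0 (nk k)). unfold g in Hgv.
    assert (Hfac : u (nk k) (v k) = u (nk k) (v k) * / u (nk k) u0 * u (nk k) u0)
      by (field; lra).
    nra.
Qed.
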